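(* Let $X$ be a topological space and $\mathcal{F}:\mathfrak{Off}(X)^{op}\to\mathsf{Grp}$ a functor to small groupoids. If $\mathcal{F}$ satisfies the condition $\mathsf{sh}(2)$ (resp. $\mathsf{st}(2)$), then $\mathcal{F}$ satisfies the condition $\mathsf{sh}(n)$ (resp. $\mathsf{st}(n)$) for every $n\ge2$.
   Context: $\mathfrak{Off}(X)$ is the poset of open subsets of $X$; for $V\subseteq W$ write $x\mapsto x|_V$ for the functor $\mathcal{F}(W)\to\mathcal{F}(V)$; $U_{ij}=U_i\cap U_j$, $U_{ijk}=U_i\cap U_j\cap U_k$. For an integer $n\ge2$, $\mathcal{F}$ satisfies $\mathsf{sh}(n)$ if for every open $U$ and every open cover $U=U_1\cup\dots\cup U_n$, the natural functor from $\mathcal{F}(U)$ to the limit (equaliser) of the two functors $\prod_i\mathcal{F}(U_i)\rightrightarrows\prod_{i,j}\mathcal{F}(U_{ij})$ is an isomorphism of categories; this equaliser is the groupoid of families $(x_i\in\mathcal{F}(U_i))$ with $x_i|_{U_{ij}}=x_j|_{U_{ij}}$ and families of morphisms $f_i$ with $f_i|_{U_{ij}}=f_j|_{U_{ij}}$. $\mathcal{F}$ satisfies $\mathsf{st}(n)$ if for every such $U$ and cover, the natural functor from $\mathcal{F}(U)$ to the 2-limit of $\prod_i\mathcal{F}(U_i)\rightrightarrows\prod_{i,j}\mathcal{F}(U_{ij})\to\prod_{i,j,k}\mathcal{F}(U_{ijk})$ is an equivalence of categories; this 2-limit is the descent groupoid whose objects are $(x_i,\phi_{ij})$ with $x_i\in\mathcal{F}(U_i)$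 and isomorphisms $\phi_{ij}:x_i|_{U_{ij}}\to x_j|_{U_{ij}}$ in $\mathcal{F}(U_{ij})$ satisfying $\phi_{jk}|_{U_{ijk}}\circ\phi_{ij}|_{U_{ijk}}=\phi_{ik}|_{U_{ijk}}$, whose morphisms $(x_i,\phi_{ij})\to(y_i,\eta_{ij})$ are families $f_i:x_i\to y_i$ with $\eta_{ij}\circ f_i|_{U_{ij}}=f_j|_{U_{ij}}\circ\phi_{ij}$, and the natural functor sends $x$ to $(x|_{U_i},\mathrm{id})$. *)

From HB Require Import structures.
From mathcomp Require Import all_boot.
From mathcomp Require Import classical_sets topology.
Set Implicit Arguments. Unset Strict Implicit. Unset Printing Implicit Defensive.
Local Open Scope classical_set_scope.

(** * Small groupoids, presented with a single type of morphisms.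
    [comp g f] is g o f, meaningful when [tgt f = src g]. *)
Record groupoid := Groupoid {
  ob : Type;
  mor : Type;
  src : mor -> ob;
  tgt : mor -> ob;
  idm : ob -> mor;
  comp : mor -> mor -> mor;
  inv : mor -> mor;
  src_idm : forall x, src (idm x) = x;
  tgt_idm : forall x, tgt (idm x) = x;
  src_comp : forall f g, tgt f = src g -> src (comp g f) = src f;
  tgt_comp : forall f g, tgt f = src g -> tgt (comp g f) = tgt g;
  compA : forall f g h, tgt f = src g -> tgt g = src h ->
            comp h (comp g f) = comp (comp h g) f;
  comp_idr : forall f, comp f (idm (src f)) = f;
  comp_idl : forall f, comp (idm (tgt f)) f = f;
  src_inv : forall f, src (inv f) = tgt f;
  tgt_inv : forall f, tgt (inv f) = src f;
  comp_invl : forall f, comp (inv f) f = idm (src f);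
  comp_invr : forall f, comp f (inv f) = idm (tgt f)
}.

Definition opens (X : topologicalType) := {U : set X | open U}.

Definition oI (X : topologicalType) (V W : opens X) : opens X :=
  exist _ (sval V `&` sval W) (openI (svalP V) (svalP W)).

Lemma oI_subl (X : topologicalType) (V W : opens X) : sval (oI V W) `<=` sval V.
Proof. exact: subIsetl. Qed.
Lemma oI_subr (X : topologicalType) (V W : opens X) : sval (oI V W) `<=` sval W.
Proof. exact: subIsetr. Qed.

Arguments oI_subl {X} V W.
Arguments oI_subr {X} V W.

Lemma oI3_ij (X : topologicalType) (A B C : opens X) :
  sval (oI (oI A B) C) `<=` sval (oI A B).
Proof. exact: subIsetl. Qed.
Lemma oI3_jk (X : topologicalType) (A B C : opens X) :
  sval (oI (oI A B) C) `<=` sval (oI B C).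
Proof. by move=> x [[]]. Qed.
Lemma oI3_ik (X : topologicalType) (A B C : opens X) :
  sval (oI (oI A B) C) `<=` sval (oI A C).
Proof. by move=> x [[]]. Qed.

Arguments oI3_ij {X} A B C.
Arguments oI3_jk {X} A B C.
Arguments oI3_ik {X} A B C.

(** Restriction along V ⊆ W is given for every proof of the inclusion, and
    functoriality is required for all such proofs (the poset has at most one
    arrow V -> W). *)
Record presheaf (X : topologicalType) := Presheaf {
  F_ :> opens X -> groupoid;
  rob : forall V W : opens X, sval V `<=` sval W -> ob (F_ W) -> ob (F_ V);
  rmor : forall V W : opens X, sval V `<=` sval W -> mor (F_ W) -> mor (F_ V);
  rmor_src : forall V W (h : sval V `<=` sval W) f, src (rmor h f) = rob h (src f);
  rmor_tgt : forall V W (h : sval V `<=` sval W) f, tgt (rmor h f) = rob h (tgt f);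
  rmor_idm : forall V W (h : sval V `<=` sval W) x, rmor h (idm x) = idm (rob h x);
  rmor_comp : forall V W (h : sval V `<=` sval W) f g, tgt f = src g ->
      rmor h (comp g f) = comp (rmor h g) (rmor h f);
  rob_id : forall W (h : sval W `<=` sval W) x, rob h x = x;
  rmor_id : forall W (h : sval W `<=` sval W) f, rmor h f = f;
  rob_comp : forall U V W (h1 : sval U `<=` sval V) (h2 : sval V `<=` sval W)
      (h3 : sval U `<=` sval W) x, rob h1 (rob h2 x) = rob h3 x;
  rmor_compose : forall U V W (h1 : sval U `<=` sval V) (h2 : sval V `<=` sval W)
      (h3 : sval U `<=` sval W) f, rmor h1 (rmor h2 f) = rmor h3 f
}.

Arguments rob {X} p {V W}.
Arguments rmor {X} p {V W}.

(** * Condition sh(n): for every open U and cover U = U_1 ∪ ... ∪ U_n, the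
    natural functor F(U) -> Eq( ∏ F(U_i) ⇉ ∏ F(U_ij) ) is an isomorphism of
    categories, i.e. bijective on objects and on morphisms. *)
Definition sh (X : topologicalType) (n : nat) (F : presheaf X) : Prop :=
  forall (U : opens X) (Ui : 'I_n -> opens X)
         (hsub : forall i, sval (Ui i) `<=` sval U),
    sval U `<=` \bigcup_i sval (Ui i) ->
    let pl i j := oI_subl (Ui i) (Ui j) in
    let pr i j := oI_subr (Ui i) (Ui j) in
    ((forall x y : ob (F U), (forall i, rob F (hsub i) x = rob F (hsub i) y) -> x = y) /\
     (forall xs : forall i, ob (F (Ui i)),
        (forall i j, rob F (pl i j) (xs i) = rob F (pr i j) (xs j)) ->
        exists x : ob (F U), forall i, rob F (hsub i) x = xs i)) /\
    ((forall f g : mor (F U), (forall i, rmor F (hsub i) f = rmor F (hsub i) g) -> f = g) /\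
     (forall fs : forall i, mor (F (Ui i)),
        (forall i j, rmor F (pl i j) (fs i) = rmor F (pr i j) (fs j)) ->
        exists f : mor (F U), forall i, rmor F (hsub i) f = fs i)).

Section Descent.
Local Unset Implicit Arguments.
Variables (X : topologicalType) (F : presheaf X) (n : nat) (Ui : 'I_n -> opens X).

Let Uij i j := oI (Ui i) (Ui j).
Let pl i j : sval (Uij i j) `<=` sval (Ui i) := oI_subl (Ui i) (Ui j).
Let pr i j : sval (Uij i j) `<=` sval (Ui j) := oI_subr (Ui i) (Ui j).

Definition descent_ob (xs : forall i, ob (F (Ui i)))
    (phi : forall i j, mor (F (Uij i j))) : Prop :=
  (forall i j, src (phi i j) = rob F (pl i j) (xs i) /\
               tgt (phi i j) = rob F (pr i j) (xs j)) /\
  (forall i j k,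
     comp (rmor F (oI3_jk (Ui i) (Ui j) (Ui k)) (phi j k))
          (rmor F (oI3_ij (Ui i) (Ui j) (Ui k)) (phi i j))
     = rmor F (oI3_ik (Ui i) (Ui j) (Ui k)) (phi i k)).

Definition descent_mor (xs : forall i, ob (F (Ui i))) (phi : forall i j, mor (F (Uij i j)))
    (ys : forall i, ob (F (Ui i))) (eta : forall i j, mor (F (Uij i j)))
    (fs : forall i, mor (F (Ui i))) : Prop :=
  (forall i, src (fs i) = xs i /\ tgt (fs i) = ys i) /\
  (forall i j, comp (eta i j) (rmor F (pl i j) (fs i))
               = comp (rmor F (pr i j) (fs j)) (phi i j)).

Definition nat_phi (U : opens X) (hsub : forall i, sval (Ui i) `<=` sval U)
    (x : ob (F U)) : forall i j, mor (F (Uij i j)) :=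
  fun i j => idm (rob F (pl i j) (rob F (hsub i) x)).

End Descent.
Arguments descent_ob {X} F {n} Ui.
Arguments descent_mor {X} F {n} Ui.
Arguments nat_phi {X} F {n Ui U} hsub x.

(** * Condition st(n): the natural functor F(U) -> descent groupoid,
    x |-> (x|U_i, id), f |-> (f|U_i), is an equivalence of categories, i.e.
    it is faithful, full and essentially surjective. *)
Definition st (X : topologicalType) (n : nat) (F : presheaf X) : Prop :=
  forall (U : opens X) (Ui : 'I_n -> opens X)
         (hsub : forall i, sval (Ui i) `<=` sval U),
    sval U `<=` \bigcup_i sval (Ui i) ->
    let xr (x : ob (F U)) := fun i => rob F (hsub i) x in
    let fr (f : mor (F U)) := fun i => rmor F (hsub i) f in
    (forall f g : mor (F U), src f = src g -> tgt f = tgt g ->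
        (forall i, fr f i = fr g i) -> f = g) /\
    (forall (x y : ob (F U)) (fs : forall i, mor (F (Ui i))),
        descent_mor F Ui (xr x) (nat_phi F hsub x) (xr y) (nat_phi F hsub y) fs ->
        exists f : mor (F U), src f = x /\ tgt f = y /\ forall i, fr f i = fs i) /\
    (forall (xs : forall i, ob (F (Ui i)))
            (phi : forall i j, mor (F (oI (Ui i) (Ui j)))),
        descent_ob F Ui xs phi ->
        exists (x : ob (F U)) (fs : forall i, mor (F (Ui i))),
          descent_mor F Ui (xr x) (nat_phi F hsub x) xs phi fs).

(* Given a cover U_1, ..., U_(n+1) of U, put V = U_1 ∪ ... ∪ U_n
   and W = U_(n+1); the case n applies to the covers of V by the U_j and of V ∩ W
   by the U_j ∩ W, and the case 2 to the cover of U by V and W.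
   For sh, objects and morphisms of F form two presheaves of types and the argument
   is the usual one for sheaves of sets.  For st, a descent datum (x_i, φ_ij) is
   first glued over V to an object v with isomorphisms g_j : v|U_j → x_j.  By the
   cocycle condition the maps φ_(j,n+1) ∘ g_j agree on overlaps, so fullness over
   V ∩ W glues them to ψ : v|V∩W → x_(n+1)|V∩W, and st(2) makes the descent datum
   (v, x_(n+1); ψ) for the cover {V, W} effective. *)

From Pilot Require Import Defs.
From mathcomp Require Import all_boot.
From mathcomp Require Import classical_sets topology.
From Stdlib Require Import ProofIrrelevance IndefiniteDescription.
(* Re-exported so that [comp] is the groupoid composition, not ssrfun's. *)
Import Defs.
Set Implicit Arguments. Unset Strict Implicit. Unset Printing Implicit Defensive.
Local Open Scope classical_set_scope.

Section Covers.
Variable X : topologicalType.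

Lemma oIC_sub (V W : opens X) : sval (oI W V) `<=` sval (oI V W).
Proof. by move=> z [? ?]. Qed.

Lemma oI_sub_oI3_diag (A : opens X) : sval (oI A A) `<=` sval (oI (oI A A) A).
Proof. by move=> z [? ?]. Qed.

Lemma oI_sub_oI3_swap (A B : opens X) : sval (oI B A) `<=` sval (oI (oI A B) A).
Proof. by move=> z [? ?]. Qed.

Lemma oI_sub_oI3_last (A B C : opens X) :
  sval (oI (oI A C) (oI B C)) `<=` sval (oI (oI A B) C).
Proof. by move=> z [[? ?] [? ?]]. Qed.

Definition pair_cover (V W : opens X) : 'I_2 -> opens X :=
  fun k => if nat_of_ord k is 0 then V else W.

Definition pair_fam (V W : opens X) (T : opens X -> Type) (v : T V) (w : T W) :
    forall k, T (pair_cover V W k) :=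
  fun k => match nat_of_ord k as m return T (if m is 0 then V else W) with
           | 0 => v | _ => w end.

Lemma pair_cover_cover (U V W : opens X) :
  sval U `<=` sval V `|` sval W -> sval U `<=` \bigcup_k sval (pair_cover V W k).
Proof. by move=> hc z /hc [hz|hz]; [exists ord0 | exists ord_max]. Qed.

Variables (n : nat) (Ui : 'I_n.+1 -> opens X).

Definition union_init : opens X :=
  exist _ (\bigcup_(j : 'I_n) sval (Ui (lift ord_max j)))
    (bigcup_open (fun j _ => svalP (Ui (lift ord_max j)))).

Lemma sub_union_init j : sval (Ui (lift ord_max j)) `<=` sval union_init.
Proof. by move=> z hz; exists j. Qed.

Lemma union_init_sub (U : opens X) :
  (forall i, sval (Ui i) `<=` sval U) -> sval union_init `<=` sval U.
Proof. by move=> hsub z [j _]; apply: hsub. Qed.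

Lemma cover_union_init_last (U : opens X) :
  sval U `<=` \bigcup_i sval (Ui i) ->
  sval U `<=` sval union_init `|` sval (Ui ord_max).
Proof.
move=> hcov z /hcov [i _]; case: (unliftP ord_max i) => [j ->|->] hz; last by right.
by left; exists j.
Qed.

Lemma oI_sub_union_init j :
  sval (oI (Ui (lift ord_max j)) (Ui ord_max)) `<=` sval (oI union_init (Ui ord_max)).
Proof. by move=> z [h1 h2]; split=> //; exists j. Qed.

Lemma oI_union_init_cover :
  sval (oI union_init (Ui ord_max)) `<=`
  \bigcup_j sval (oI (Ui (lift ord_max j)) (Ui ord_max)).
Proof. by move=> z [[j _ h1] h2]; exists j. Qed.

End Covers.

Arguments sub_union_init {X n Ui} j.
Arguments oI_sub_union_init {X n Ui} j.
Arguments oI_union_init_cover {X n Ui}.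
Arguments oIC_sub {X} V W.
Arguments oI_sub_oI3_diag {X} A.
Arguments oI_sub_oI3_swap {X} A B.
Arguments oI_sub_oI3_last {X} A B C.

Section Gluing.
Variables (X : topologicalType) (T : opens X -> Type)
  (r : forall V W : opens X, sval V `<=` sval W -> T W -> T V).
Arguments r {V W}.

Lemma restr_pi V W (h h' : sval V `<=` sval W) x : r h x = r h' x.
Proof. by rewrite (proof_irrelevance _ h h'). Qed.

Hypothesis r_comp : forall U V W (h1 : sval U `<=` sval V) (h2 : sval V `<=` sval W)
  (h3 : sval U `<=` sval W) x, r h1 (r h2 x) = r h3 x.
Arguments r_comp {U V W}.

Definition sheaf_cond (n : nat) : Prop :=
  forall (U : opens X) (Ui : 'I_n -> opens X)
         (hsub : forall i, sval (Ui i) `<=` sval U),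
    sval U `<=` \bigcup_i sval (Ui i) ->
    (forall x y : T U, (forall i, r (hsub i) x = r (hsub i) y) -> x = y) /\
    (forall xs : forall i, T (Ui i),
       (forall i j, r (oI_subl (Ui i) (Ui j)) (xs i) = r (oI_subr (Ui i) (Ui j)) (xs j)) ->
       exists x, forall i, r (hsub i) x = xs i).

Hypothesis sheaf2 : sheaf_cond 2.

Lemma sheaf_cond_pair (U V W : opens X) (hV : sval V `<=` sval U) (hW : sval W `<=` sval U) :
  sval U `<=` sval V `|` sval W ->
  (forall x y, r hV x = r hV y -> r hW x = r hW y -> x = y) /\
  (forall v w, r (oI_subl V W) v = r (oI_subr V W) w ->
     exists x, r hV x = v /\ r hW x = w).
Proof.
move=> /pair_cover_cover hc.
have [sep glue] := sheaf2 (pair_fam (T := fun O => sval O `<=` sval U) hV hW) hc.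
split=> [x y eV eW | v w e]; first by apply: sep => -[[|[|m]] hm].
have [|x hx] := glue (pair_fam v w); last first.
  by exists x; split; [apply: (hx ord0) | apply: (hx ord_max)].
move=> [[|[|m]] hi] [[|[|m']] hj] //=; try exact: restr_pi.
rewrite -(r_comp (oIC_sub V W) (oI_subr V W)) -e; exact: r_comp.
Qed.

Lemma sheaf_cond_succ n : sheaf_cond n -> sheaf_cond n.+1.
Proof.
move=> sheafn U Ui hsub hcov.
have [sep2 glue2] := sheaf_cond_pair (union_init_sub hsub) (hsub ord_max)
  (cover_union_init_last hcov).
have [sepV glueV] := sheafn _ _ (sub_union_init (Ui := Ui)) (@subset_refl _ _).
have [sepP _] := sheafn _ _ (oI_sub_union_init (Ui := Ui)) oI_union_init_cover.
split=> [x y hxy | xs hxs].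
  apply: sep2 (hxy ord_max); apply: sepV => j.
  by rewrite !(r_comp _ _ (hsub (lift ord_max j))) hxy.
have [v hv] := glueV (fun j => xs (lift ord_max j)) (fun i j => hxs _ _).
have [|x [hxV hxW]] := glue2 v (xs ord_max).
  apply: sepP => j.
  rewrite (r_comp _ _ (subset_trans (oI_subl _ _) (sub_union_init j))).
  rewrite -(r_comp (oI_subl _ (Ui ord_max)) (sub_union_init j)) hv hxs.
  exact/esym/r_comp.
exists x => i; case: (unliftP ord_max i) => [j ->|->] //.
by rewrite -(r_comp (sub_union_init j) (union_init_sub hsub)) hxV hv.
Qed.

End Gluing.

Lemma sh_sheaf_cond (X : topologicalType) (F : presheaf X) n :
  sh n F <-> sheaf_cond (T := fun V => ob (F V)) (@rob X F) n /\
             sheaf_cond (T := fun V => mor (F V)) (@rmor X F) n.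
Proof.
split=> [H | [Hob Hmor] U Ui hsub hcov].
  by split=> U Ui hsub hcov; have [[? ?] [? ?]] := H U Ui hsub hcov.
by have [? ?] := Hob U Ui hsub hcov; have [? ?] := Hmor U Ui hsub hcov.
Qed.

Lemma sh_succ (X : topologicalType) (F : presheaf X) n : sh 2 F -> sh n F -> sh n.+1 F.
Proof.
move=> /sh_sheaf_cond [ob2 mor2] /sh_sheaf_cond [obn morn]; apply/sh_sheaf_cond.
by split; apply: sheaf_cond_succ; rewrite ?obn ?morn //; [exact: rob_comp | exact: rmor_compose].
Qed.

Section PresheafRestriction.
Variables (X : topologicalType) (F : presheaf X) (U V W : opens X).

Lemma rob_pi (h h' : sval V `<=` sval W) x : rob F h x = rob F h' x.
Proof. exact: (restr_pi (T := fun V => ob (F V))). Qed.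

Lemma rmor_pi (h h' : sval V `<=` sval W) f : rmor F h f = rmor F h' f.
Proof. exact: (restr_pi (T := fun V => mor (F V))). Qed.

Lemma rob_rob (h1 : sval U `<=` sval V) (h2 : sval V `<=` sval W) x :
  rob F h1 (rob F h2 x) = rob F (subset_trans h1 h2) x.
Proof. exact: rob_comp. Qed.

Lemma rmor_rmor (h1 : sval U `<=` sval V) (h2 : sval V `<=` sval W) f :
  rmor F h1 (rmor F h2 f) = rmor F (subset_trans h1 h2) f.
Proof. exact: rmor_compose. Qed.

End PresheafRestriction.

(* Collapses iterated restrictions; what remains differs only in inclusion proofs. *)
Ltac restr_eq := rewrite ?rob_rob ?rmor_rmor; first [apply: rob_pi | apply: rmor_pi].

Section GroupoidFacts.
Variable G : groupoid.
Implicit Types a g : mor G.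

Lemma comp_idr_eq g z : z = src g -> comp g (idm z) = g.
Proof. by move=> ->; exact: comp_idr. Qed.

Lemma comp_idl_eq g z : z = tgt g -> comp (idm z) g = g.
Proof. by move=> ->; exact: comp_idl. Qed.

Lemma idempotent_idm a : tgt a = src a -> comp a a = a -> a = idm (src a).
Proof.
move=> ta aa; have : comp (comp a a) (inv a) = comp a (inv a) by rewrite aa.
by rewrite -compA ?tgt_inv // comp_invr ta comp_idr.
Qed.

End GroupoidFacts.

Section DescentFacts.
Variables (X : topologicalType) (F : presheaf X).

Lemma comp_rmor V W (h h' : sval V `<=` sval W) f g : tgt f = src g ->
  comp (rmor F h g) (rmor F h' f) = rmor F h' (comp g f).
Proof. by move=> fg; rewrite (rmor_pi h h') rmor_comp. Qed.

Section NaturalDescentMorphisms.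
Variables (n : nat) (Ui : 'I_n -> opens X) (U : opens X)
  (hsub : forall i, sval (Ui i) `<=` sval U).
Arguments hsub : clear implicits.

Lemma descent_mor_nat_srcE x ys eta fs :
  descent_mor F Ui (fun i => rob F (hsub i) x) (nat_phi F hsub x) ys eta fs <->
  (forall i, src (fs i) = rob F (hsub i) x /\ tgt (fs i) = ys i) /\
  (forall i j, comp (eta i j) (rmor F (oI_subl (Ui i) (Ui j)) (fs i)) =
               rmor F (oI_subr (Ui i) (Ui j)) (fs j)).
Proof.
rewrite /descent_mor /nat_phi; split=> -[hst hc]; split=> // i j; rewrite hc.
  by apply: comp_idr_eq; rewrite rmor_src (hst j).1; restr_eq.
by rewrite comp_idr_eq // rmor_src (hst j).1; restr_eq.
Qed.

Lemma descent_mor_natE x y fs :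
  descent_mor F Ui (fun i => rob F (hsub i) x) (nat_phi F hsub x)
    (fun i => rob F (hsub i) y) (nat_phi F hsub y) fs <->
  (forall i, src (fs i) = rob F (hsub i) x /\ tgt (fs i) = rob F (hsub i) y) /\
  (forall i j, rmor F (oI_subl (Ui i) (Ui j)) (fs i) = rmor F (oI_subr (Ui i) (Ui j)) (fs j)).
Proof.
rewrite descent_mor_nat_srcE; split=> -[hst hc]; split=> // i j; rewrite -hc /nat_phi.
  by rewrite comp_idl_eq // rmor_tgt (hst i).2; restr_eq.
by rewrite comp_idl_eq // rmor_tgt (hst i).2; restr_eq.
Qed.

End NaturalDescentMorphisms.

Variables (n : nat) (Ui : 'I_n -> opens X).
Variables (xs : forall i, ob (F (Ui i))) (phi : forall i j, mor (F (oI (Ui i) (Ui j)))).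
Hypothesis hd : descent_ob F Ui xs phi.

Let phi_src i j : src (phi i j) = rob F (oI_subl (Ui i) (Ui j)) (xs i) := (hd.1 i j).1.
Let phi_tgt i j : tgt (phi i j) = rob F (oI_subr (Ui i) (Ui j)) (xs j) := (hd.1 i j).2.

Lemma descent_diag i : phi i i = idm (rob F (oI_subl (Ui i) (Ui i)) (xs i)).
Proof.
set A := Ui i.
have idm3 : rmor F (oI3_ij A A A) (phi i i) = idm (src (rmor F (oI3_ij A A A) (phi i i))).
  apply: idempotent_idm; first by rewrite rmor_src rmor_tgt phi_src phi_tgt; restr_eq.
  rewrite -[in RHS](rmor_pi (oI3_ik A A A)) -hd.2; congr comp; restr_eq.
rewrite -[LHS](rmor_id (p := F) (@subset_refl _ _)).
rewrite (rmor_pi _ (subset_trans (oI_sub_oI3_diag A) (oI3_ij A A A))).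
by rewrite -rmor_rmor idm3 rmor_idm rmor_src phi_src; congr idm; restr_eq.
Qed.

Lemma descent_inv i j :
  comp (phi j i) (rmor F (oIC_sub (Ui i) (Ui j)) (phi i j)) =
  idm (rob F (oI_subr (Ui j) (Ui i)) (xs i)).
Proof.
have := f_equal (rmor F (oI_sub_oI3_swap (Ui i) (Ui j))) (hd.2 i j i).
rewrite rmor_comp; last by rewrite rmor_tgt rmor_src phi_tgt phi_src; restr_eq.
rewrite !rmor_rmor rmor_id descent_diag rmor_idm => inv_ij.
rewrite (rmor_pi _ (subset_trans (oI_sub_oI3_swap _ _) (oI3_ij _ _ _))) inv_ij.
by congr idm; restr_eq.
Qed.

Section CompatibleMorphisms.
Variables (i j : 'I_n) (gi : mor (F (Ui i))) (gj : mor (F (Ui j))).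
Hypotheses (gi_tgt : tgt gi = xs i) (gj_tgt : tgt gj = xs j)
  (gij : comp (phi i j) (rmor F (oI_subl (Ui i) (Ui j)) gi) = rmor F (oI_subr (Ui i) (Ui j)) gj).

Lemma descent_compat_swap :
  comp (phi j i) (rmor F (oI_subl (Ui j) (Ui i)) gj) = rmor F (oI_subr (Ui j) (Ui i)) gi.
Proof.
rewrite (rmor_pi _ (subset_trans (oIC_sub (Ui i) (Ui j)) (oI_subr (Ui i) (Ui j)))).
rewrite -rmor_rmor -gij rmor_comp; last by rewrite rmor_tgt gi_tgt phi_src.
rewrite compA ?rmor_tgt ?rmor_src ?gi_tgt ?phi_src ?phi_tgt; try by restr_eq.
rewrite descent_inv comp_idl_eq; first by restr_eq.
by rewrite !rmor_tgt gi_tgt; restr_eq.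
Qed.

Lemma descent_compat_transport k :
  rmor F (oI_subl (oI (Ui i) (Ui k)) (oI (Ui j) (Ui k)))
    (comp (phi i k) (rmor F (oI_subl (Ui i) (Ui k)) gi)) =
  rmor F (oI_subr (oI (Ui i) (Ui k)) (oI (Ui j) (Ui k)))
    (comp (phi j k) (rmor F (oI_subl (Ui j) (Ui k)) gj)).
Proof.
set q := oI_sub_oI3_last (Ui i) (Ui j) (Ui k).
set pij := subset_trans q (oI3_ij _ _ _).
have cocycle : comp (rmor F (oI_subr (oI (Ui i) (Ui k)) (oI (Ui j) (Ui k))) (phi j k))
    (rmor F pij (phi i j)) = rmor F (oI_subl (oI (Ui i) (Ui k)) (oI (Ui j) (Ui k))) (phi i k).
  have := f_equal (rmor F q) (hd.2 i j k).
  rewrite rmor_comp; last by rewrite rmor_tgt rmor_src phi_tgt phi_src; restr_eq.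
  rewrite !rmor_rmor (rmor_pi _ (oI_subr _ _)) [RHS](rmor_pi _ (oI_subl _ _)).
  by rewrite (rmor_pi (subset_trans q (oI3_ij _ _ _)) pij).
have gj_restr : rmor F (subset_trans (oI_subr _ _) (oI_subl (Ui j) (Ui k))) gj =
    comp (rmor F pij (phi i j)) (rmor F (subset_trans pij (oI_subl (Ui i) (Ui j))) gi).
  rewrite (rmor_pi _ (subset_trans pij (oI_subr (Ui i) (Ui j)))) -rmor_rmor -gij.
  by rewrite rmor_comp ?rmor_rmor // rmor_tgt gi_tgt phi_src.
rewrite rmor_comp; last by rewrite rmor_tgt gi_tgt phi_src.
rewrite [RHS]rmor_comp; last by rewrite rmor_tgt gj_tgt phi_src.
rewrite !rmor_rmor gj_restr compA; first 1 last.
- by rewrite !rmor_tgt !rmor_src gi_tgt phi_src; restr_eq.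
- by rewrite !rmor_tgt !rmor_src phi_tgt phi_src; restr_eq.
by rewrite cocycle; congr comp; restr_eq.
Qed.

End CompatibleMorphisms.

End DescentFacts.

Section PairCover.
Variables (X : topologicalType) (F : presheaf X) (V W : opens X).

Definition pair_datum (xV : ob (F V)) (xW : ob (F W)) (psi : mor (F (oI V W))) :
    forall i j : 'I_2, mor (F (oI (pair_cover V W i) (pair_cover V W j))) :=
  fun i j => match nat_of_ord i as a, nat_of_ord j as b
    return mor (F (oI (if a is 0 then V else W) (if b is 0 then V else W))) with
  | 0, 0 => idm (rob F (oI_subl V V) xV)
  | 0, _.+1 => psi
  | _.+1, 0 => rmor F (oIC_sub V W) (inv psi)
  | _.+1, _.+1 => idm (rob F (oI_subl W W) xW)
  end.

Lemma pair_datum_descent xV xW psi :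
  src psi = rob F (oI_subl V W) xV -> tgt psi = rob F (oI_subr V W) xW ->
  descent_ob F (pair_cover V W) (pair_fam (T := fun O => ob (F O)) xV xW)
    (pair_datum xV xW psi).
Proof.
move=> hs ht; split.
  by move=> [[|[|m]] hi] [[|[|m']] hj] //; rewrite /pair_datum /=; split;
    rewrite ?rmor_src ?rmor_tgt ?src_inv ?tgt_inv ?src_idm ?tgt_idm ?hs ?ht; restr_eq.
move=> [[|[|m]] hi] [[|[|m']] hj] [[|[|m'']] hk] //; rewrite /pair_datum /= ?rmor_rmor.
all: rewrite ?rmor_idm; first
  [ rewrite comp_rmor ?src_inv ?tgt_inv // ?comp_invl ?comp_invr rmor_idm ?hs ?ht
  | rewrite comp_idl_eq | rewrite comp_idr_eq ].
all: try (congr idm; restr_eq).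
all: rewrite ?rmor_src ?rmor_tgt ?src_inv ?tgt_inv ?src_idm ?tgt_idm ?hs ?ht; restr_eq.
Qed.

Variables (U : opens X) (hV : sval V `<=` sval U) (hW : sval W `<=` sval U).
Arguments hV : clear implicits.
Arguments hW : clear implicits.
Hypotheses (hc : sval U `<=` sval V `|` sval W) (st2 : st 2 F).

Let st_pair := st2 (pair_fam (T := fun O => sval O `<=` sval U) hV hW) (pair_cover_cover hc).

Lemma st_pair_faithful f g : src f = src g -> tgt f = tgt g ->
  rmor F hV f = rmor F hV g -> rmor F hW f = rmor F hW g -> f = g.
Proof.
have [faithful _] := st_pair.
by move=> fg_src fg_tgt eV eW; apply: faithful => // -[[|[|m]] hm].
Qed.

Lemma st_pair_full x y fV fW :
  src fV = rob F hV x -> tgt fV = rob F hV y ->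
  src fW = rob F hW x -> tgt fW = rob F hW y ->
  rmor F (oI_subl V W) fV = rmor F (oI_subr V W) fW ->
  exists f, src f = x /\ tgt f = y /\ rmor F hV f = fV /\ rmor F hW f = fW.
Proof.
move=> sV tV sW tW e; have [_ [full _]] := st_pair.
have [|f [sf [tf hf]]] := full x y (pair_fam (T := fun O => mor (F O)) fV fW).
  apply/descent_mor_natE; split; first by move=> [[|[|m]] hi].
  move=> [[|[|m]] hi] [[|[|m']] hj] //=; try restr_eq.
  rewrite (rmor_pi _ (subset_trans (oIC_sub V W) (oI_subr V W))) -rmor_rmor -e.
  by rewrite rmor_rmor; restr_eq.
by exists f; do 3 split=> //; [exact: (hf ord0) | exact: (hf ord_max)].
Qed.

Lemma st_pair_esssurj xV xW psi :
  src psi = rob F (oI_subl V W) xV -> tgt psi = rob F (oI_subr V W) xW ->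
  exists x fV fW, src fV = rob F hV x /\ tgt fV = xV /\ src fW = rob F hW x /\
    tgt fW = xW /\ comp psi (rmor F (oI_subl V W) fV) = rmor F (oI_subr V W) fW.
Proof.
move=> hs ht; have [_ [_ esssurj]] := st_pair.
have [x [fs /descent_mor_nat_srcE [hst hfs]]] := esssurj _ _ (pair_datum_descent hs ht).
exists x, (fs ord0), (fs ord_max).
have [[s0 t0] [s1 t1]] := (hst ord0, hst ord_max).
by do 4 split=> //; exact: (hfs ord0 ord_max).
Qed.

End PairCover.

Lemma family_lift_max n (T : 'I_n.+1 -> Type)
    (g : forall j : 'I_n, T (lift ord_max j)) (w : T ord_max) :
  exists f : forall i, T i, (forall j, f (lift ord_max j) = g j) /\ f ord_max = w.
Proof.
have value i : exists t : T i,
    (forall j (e : lift ord_max j = i), t = eq_rect _ T (g j) i e) /\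
    (forall e : ord_max = i, t = eq_rect _ T w i e).
  case: (unliftP ord_max i) => [j ->|->].
    exists (g j); split=> [j' e | e].
      by have ej := lift_inj e; subst j'; rewrite (eq_irrelevance e erefl).
    by exfalso; move: (neq_lift ord_max j); rewrite -e eqxx.
  exists w; split=> [j e | e]; first by exfalso; move: (neq_lift ord_max j); rewrite e eqxx.
  by rewrite (eq_irrelevance e erefl).
exists (fun i => sval (constructive_indefinite_description _ (value i))); split.
  move=> j; case: (constructive_indefinite_description _ _) => /= t [ht _].
  exact: ht j erefl.
by case: (constructive_indefinite_description _ _) => /= t [_ ht]; exact: ht erefl.
Qed.

Section StSucc.
Variables (X : topologicalType) (F : presheaf X) (n : nat).
Hypotheses (st2 : st 2 F) (stn : st n F).
Variables (U : opens X) (Ui : 'I_n.+1 -> opens X)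
  (hsub : forall i, sval (Ui i) `<=` sval U).
Arguments hsub : clear implicits.
Hypothesis hcov : sval U `<=` \bigcup_i sval (Ui i).

Local Notation V := (union_init Ui).
Local Notation W := (Ui ord_max).
Local Notation init j := (lift ord_max j).

Let hV := union_init_sub hsub.
Let hVW := cover_union_init_last hcov.

Lemma st_succ_faithful f g : src f = src g -> tgt f = tgt g ->
  (forall i, rmor F (hsub i) f = rmor F (hsub i) g) -> f = g.
Proof.
move=> fg_src fg_tgt hfg.
apply: (st_pair_faithful hVW st2 fg_src fg_tgt _ (hfg ord_max)).
have [faithfulV _] := stn (sub_union_init (Ui := Ui)) (@subset_refl _ _).
apply: faithfulV; [by rewrite !rmor_src fg_src | by rewrite !rmor_tgt fg_tgt | move=> j].
by rewrite !rmor_rmor (rmor_pi _ (hsub (init j))) hfg; restr_eq.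
Qed.

Lemma st_succ_full x y fs :
  descent_mor F Ui (fun i => rob F (hsub i) x) (nat_phi F hsub x)
    (fun i => rob F (hsub i) y) (nat_phi F hsub y) fs ->
  exists f, src f = x /\ tgt f = y /\ forall i, rmor F (hsub i) f = fs i.
Proof.
move=> /descent_mor_natE [fs_st fs_compat].
have [_ [fullV _]] := stn (sub_union_init (Ui := Ui)) (@subset_refl _ _).
have [|fV [fV_src [fV_tgt hfV]]] := fullV (rob F hV x) (rob F hV y) (fun j => fs (init j)).
  apply/descent_mor_natE; split=> [j | i j]; last exact: fs_compat.
  by rewrite (fs_st _).1 (fs_st _).2; split; restr_eq.
have [faithfulP _] := stn (oI_sub_union_init (Ui := Ui)) oI_union_init_cover.
have [|f [f_src [f_tgt [hfV' hfW]]]] :=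
  st_pair_full hVW st2 fV_src fV_tgt (fs_st ord_max).1 (fs_st ord_max).2.
  apply: faithfulP => [||j].
  - by rewrite !rmor_src fV_src (fs_st _).1; restr_eq.
  - by rewrite !rmor_tgt fV_tgt (fs_st _).2; restr_eq.
  rewrite !rmor_rmor (rmor_pi _ (subset_trans (oI_subl _ _) (sub_union_init j))).
  by rewrite -rmor_rmor hfV fs_compat; restr_eq.
exists f; do 2 split=> //; move=> i; case: (unliftP ord_max i) => [j ->|->] //.
by rewrite (rmor_pi _ (subset_trans (sub_union_init j) hV)) -rmor_rmor hfV' hfV.
Qed.

Section EssentialSurjectivity.
Variables (xs : forall i, ob (F (Ui i))) (phi : forall i j, mor (F (oI (Ui i) (Ui j)))).
Hypothesis hd : descent_ob F Ui xs phi.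

Let phi_src i j : src (phi i j) = rob F (oI_subl (Ui i) (Ui j)) (xs i) := (hd.1 i j).1.
Let phi_tgt i j : tgt (phi i j) = rob F (oI_subr (Ui i) (Ui j)) (xs j) := (hd.1 i j).2.

Lemma descent_ob_init :
  descent_ob F (fun j => Ui (init j)) (fun j => xs (init j)) (fun i j => phi (init i) (init j)).
Proof. by split=> [i j | i j k]; [exact: hd.1 | exact: hd.2]. Qed.

Variables (v : ob (F V)) (gs : forall j, mor (F (Ui (init j)))).
Hypotheses (gs_src : forall j, src (gs j) = rob F (sub_union_init j) v)
  (gs_tgt : forall j, tgt (gs j) = xs (init j))
  (gs_compat : forall i j, comp (phi (init i) (init j)) (rmor F (oI_subl _ _) (gs i)) =
                           rmor F (oI_subr _ _) (gs j)).

Lemma transition_to_last : exists psi : mor (F (oI V W)),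
  src psi = rob F (oI_subl V W) v /\ tgt psi = rob F (oI_subr V W) (xs ord_max) /\
  forall j, rmor F (oI_sub_union_init j) psi =
            comp (phi (init j) ord_max) (rmor F (oI_subl _ _) (gs j)).
Proof.
have [_ [fullP _]] := stn (oI_sub_union_init (Ui := Ui)) oI_union_init_cover.
apply: fullP; apply/descent_mor_natE; split=> [j | i j].
  have gs_phi : tgt (rmor F (oI_subl _ W) (gs j)) = src (phi (init j) ord_max).
    by rewrite rmor_tgt gs_tgt phi_src.
  by rewrite src_comp // tgt_comp // rmor_src gs_src phi_tgt; split; restr_eq.
exact: (descent_compat_transport hd (gs_tgt i) (gs_tgt j) (gs_compat i j) ord_max).
Qed.

Variables (psi : mor (F (oI V W))) (x : ob (F U)) (fV : mor (F V)) (fW : mor (F W)).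
Hypotheses (psi_src : src psi = rob F (oI_subl V W) v)
  (psi_gs : forall j, rmor F (oI_sub_union_init j) psi =
                      comp (phi (init j) ord_max) (rmor F (oI_subl _ _) (gs j)))
  (fV_src : src fV = rob F hV x) (fV_tgt : tgt fV = v)
  (fW_src : src fW = rob F (hsub ord_max) x) (fW_tgt : tgt fW = xs ord_max)
  (psi_fV : comp psi (rmor F (oI_subl V W) fV) = rmor F (oI_subr V W) fW).

Let fs_init j := comp (gs j) (rmor F (sub_union_init j) fV).

Let fV_gs j : tgt (rmor F (sub_union_init j) fV) = src (gs j).
Proof. by rewrite rmor_tgt fV_tgt gs_src. Qed.

Lemma fs_init_src_tgt j :
  src (fs_init j) = rob F (hsub (init j)) x /\ tgt (fs_init j) = xs (init j).
Proof. by rewrite src_comp // tgt_comp // rmor_src fV_src gs_tgt; split=> //; restr_eq. Qed.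

Lemma fs_init_compat i j :
  comp (phi (init i) (init j)) (rmor F (oI_subl _ _) (fs_init i)) =
  rmor F (oI_subr _ _) (fs_init j).
Proof.
rewrite /fs_init rmor_comp // compA; first 1 last.
- by rewrite !rmor_tgt !rmor_src fV_tgt gs_src; restr_eq.
- by rewrite !rmor_tgt gs_tgt phi_src.
by rewrite gs_compat [RHS]rmor_comp //; congr comp; restr_eq.
Qed.

Lemma fs_init_last j :
  comp (phi (init j) ord_max) (rmor F (oI_subl _ _) (fs_init j)) = rmor F (oI_subr _ _) fW.
Proof.
rewrite /fs_init rmor_comp // compA; first 1 last.
- by rewrite !rmor_tgt !rmor_src fV_tgt gs_src; restr_eq.
- by rewrite !rmor_tgt gs_tgt phi_src.
rewrite -psi_gs rmor_rmor.
rewrite (rmor_pi _ (subset_trans (oI_sub_union_init j) (oI_subl V W))) -rmor_rmor.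
rewrite comp_rmor; last by rewrite rmor_tgt fV_tgt psi_src.
by rewrite psi_fV rmor_rmor; restr_eq.
Qed.

Lemma descent_mor_extend :
  exists fs, descent_mor F Ui (fun i => rob F (hsub i) x) (nat_phi F hsub x) xs phi fs.
Proof.
have [fs [fs_init_eq fs_last]] :=
  family_lift_max (T := fun i => mor (F (Ui i))) fs_init fW.
have fs_tgt i : tgt (fs i) = xs i.
  case: (unliftP ord_max i) => [j ->|->]; last by rewrite fs_last.
  by rewrite fs_init_eq (fs_init_src_tgt j).2.
exists fs; apply/descent_mor_nat_srcE; split=> [i | i j].
  case: (unliftP ord_max i) => [j ->|->]; last by rewrite fs_last.
  by rewrite fs_init_eq; exact: fs_init_src_tgt.
case: (unliftP ord_max i) => [a ->|->]; case: (unliftP ord_max j) => [b ->|->].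
- by rewrite !fs_init_eq; exact: fs_init_compat.
- by rewrite fs_init_eq fs_last; exact: fs_init_last.
- apply: (descent_compat_swap hd (fs_tgt (init b))).
  by rewrite fs_init_eq fs_last; exact: fs_init_last.
by rewrite (descent_diag hd) comp_idl_eq ?rmor_tgt ?fs_tgt; restr_eq.
Qed.

End EssentialSurjectivity.

Lemma st_succ_esssurj xs phi : descent_ob F Ui xs phi ->
  exists x fs, descent_mor F Ui (fun i => rob F (hsub i) x) (nat_phi F hsub x) xs phi fs.
Proof.
move=> hd.
have [_ [_ esssurjV]] := stn (sub_union_init (Ui := Ui)) (@subset_refl _ _).
have [v [gs /descent_mor_nat_srcE [gs_st gs_compat]]] := esssurjV _ _ (descent_ob_init hd).
have gs_src j := (gs_st j).1; have gs_tgt j := (gs_st j).2.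
have [psi [psi_src [psi_tgt psi_gs]]] := transition_to_last hd gs_src gs_tgt gs_compat.
have [x [fV [fW [fV_src [fV_tgt [fW_src [fW_tgt psi_fV]]]]]]] :=
  st_pair_esssurj hV (hsub ord_max) hVW st2 psi_src psi_tgt.
exists x; exact: (descent_mor_extend hd gs_src gs_tgt gs_compat psi_src psi_gs
  fV_src fV_tgt fW_src fW_tgt psi_fV).
Qed.

End StSucc.

Lemma st_succ (X : topologicalType) (F : presheaf X) n : st 2 F -> st n F -> st n.+1 F.
Proof.
move=> st2 stn U Ui hsub hcov /=; split; [|split].
- exact: st_succ_faithful.
- exact: st_succ_full.
- exact: st_succ_esssurj.
Qed.

Lemma ge2_ind (P : nat -> Prop) : P 2 -> (forall n, P n -> P n.+1) -> forall n, 2 <= n -> P n.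
Proof.
move=> P2 PS; elim=> [|n IH] //.
by rewrite leq_eqVlt => /orP [/eqP <- // | /IH /PS].
Qed.

Theorem lemma6p2 (X : topologicalType) (F : presheaf X) :
  (sh 2 F -> forall n : nat, 2 <= n -> sh n F) /\
  (st 2 F -> forall n : nat, 2 <= n -> st n F).
Proof. by split=> H2; apply: ge2_ind => // n; [exact: sh_succ | exact: st_succ]. Qed.
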